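(* Let $\ell\ge 1$, $u=a^{\ell+1}$ and $v=a^{\ell}b$. For $\phi\in\mathbf{LTL}(\mathbf{F},\mathbf{X},\wedge)$ define $[\phi]\in\mathbf{LTL}(\mathbf{X},\wedge)$ inductively by $[c]=c$, $[\phi_1\wedge\phi_2]=[\phi_1]\wedge[\phi_2]$, $[\mathbf{X}\phi']=\mathbf{X}[\phi']$, $[\mathbf{F}\phi']=[\phi']$. Then for every $\phi\in\mathbf{LTL}(\mathbf{F},\mathbf{X},\wedge)$: (i) for every word $w$ and position $i$, $w,i\models[\phi]$ implies $w,i\models\phi$; (ii) for all $i\in[2,\ell+1]$ and $i'\in[1,i-1]$, $u,i\models\phi$ implies $v,i'\models\phi$; (iii) for all $i\in[1,\ell+1]$, if $u,i\models\phi$ and $v,i\not\models\phi$ then $u,i\models[\phi]$. Consequently, if $\phi$ separates $u$ from a family of words containing $v$, then $[\phi]$ (whose size is at most that of $\phi$) also separates $u$ from that family.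
   Context: Alphabet $\Sigma=\{a,b\}$; words nonempty, indexed from 1. Semantics on a word $w$ of length $\ell$ at position $i\in[1,\ell]$: $w,i\models c$ iff $w(i)=c$; $\wedge$ as usual; $w,i\models\mathbf{X}\phi$ iff $i<\ell$ and $w,i+1\models\phi$; $w,i\models\mathbf{F}\phi$ iff $w,i'\models\phi$ for some $i'\in[i,\ell]$; $w\models\phi$ iff $w,1\models\phi$. Size = number of syntax tree nodes. $\phi$ separates $u$ from a family of words if $u\models\phi$ and no word of the family satisfies $\phi$. *)

From mathcomp Require Import all_boot.
Set Implicit Arguments. Unset Strict Implicit. Unset Printing Implicit Defensive.

(* Alphabet {a,b}; words are sequences of letters, positions indexed from 1. *)
Inductive letter := La | Lb.

Definition word := seq letter.

Inductive form :=
| Atom of letter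
| And of form & form
| Next of form
| Fin of form.

Fixpoint fsize (f : form) : nat :=
  match f with
  | Atom _ => 1
  | And f1 f2 => (fsize f1 + fsize f2).+1
  | Next f1 => (fsize f1).+1
  | Fin f1 => (fsize f1).+1
  end.

(* w, i |= f  (meaningful for 1 <= i <= size w) *)
Fixpoint sat (w : word) (i : nat) (f : form) : Prop :=
  match f with
  | Atom c => nth La w i.-1 = c
  | And f1 f2 => sat w i f1 /\ sat w i f2
  | Next f1 => i < size w /\ sat w i.+1 f1
  | Fin f1 => exists i', i <= i' <= size w /\ sat w i' f1
  end.

Definition models (w : word) (f : form) : Prop := sat w 1 f.

Definition separates (u : word) (Fam : word -> Prop) (f : form) : Prop :=
  models u f /\ forall w, Fam w -> ~ models w f.

Fixpoint strip (f : form) : form :=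
  match f with
  | Atom c => Atom c
  | And f1 f2 => And (strip f1) (strip f2)
  | Next f1 => Next (strip f1)
  | Fin f1 => strip f1
  end.

Fixpoint noF (f : form) : bool :=
  match f with
  | Atom _ => true
  | And f1 f2 => noF f1 && noF f2
  | Next f1 => noF f1
  | Fin _ => false
  end.

Definition uword (l : nat) : word := nseq l.+1 La.
Definition vword (l : nat) : word := rcons (nseq l La) Lb.

From mathcomp Require Import all_boot.
From mathcomp Require Import zify.

(* The proof rests on three facts, each by structural induction on phi:
   - soundness of erasure: w,i |= [phi] implies w,i |= phi on any word, since
     each erased F is witnessed by the current position itself;
   - on an all-a word, a formula true at position i has its erasure true at
     every earlier position i0 <= i: atoms hold everywhere, X shifts both
     positions, and F only moves the satisfying position to the right;
   - on u = a^(l+1) versus v = a^l b, truth of phi at position i >= 2 of u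
     transfers to any earlier position i' < i of v: the relevant suffix of v
     starting at i' is a^(i-i') followed by a copy of the part of u read
     from i, shifted left, so an F-witness j for u moves to i' + (j - i).
   Statement (iii) of the theorem is in fact an instance of the second fact, and the separation
   corollary combines the second fact at position 1 with soundness. *)

Lemma noF_strip (phi : form) : noF (strip phi).
Proof. by elim: phi => //= f1 -> f2 ->. Qed.

Lemma fsize_strip (phi : form) : fsize (strip phi) <= fsize phi.
Proof. by elim: phi => [c|f1 H1 f2 H2|f H|f H] /=; lia. Qed.

Lemma strip_sound (phi : form) (w : word) (i : nat) :
  i <= size w -> sat w i (strip phi) -> sat w i phi.
Proof.
elim: phi w i => [c|f1 H1 f2 H2|f H|f H] w i hi //=.
- by case=> h1 h2; split; [apply: H1 | apply: H2].
- by case=> h1 h2; split=> //; apply: H.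
- by move=> h; exists i; split; [rewrite leqnn | apply: H].
Qed.

Lemma aword_strip (n : nat) (phi : form) (i i0 : nat) :
  sat (nseq n La) i phi -> i0 <= i -> sat (nseq n La) i0 (strip phi).
Proof.
have nthA k : nth La (nseq n La) k = La by rewrite nth_nseq; case: ifP.
elim: phi i i0 => [c|f1 H1 f2 H2|f H|f H] i i0 /=.
- by rewrite !nthA.
- by case=> h1 h2 hi0; split; [apply: (H1 i) | apply: (H2 i)].
- by case=> h1 h2 hi0; split; [lia | apply: (H i.+1)].
- by case=> j [hj h] hi0; apply: (H j) => //; lia.
Qed.

Section ShiftUV.

Variable l : nat.

Lemma nth_vword (k : nat) : k < l -> nth La (vword l) k = La.
Proof. by move=> hk; rewrite /vword nth_rcons size_nseq hk nth_nseq hk. Qed.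

Lemma uword_vword_shift (phi : form) (i i' : nat) :
  2 <= i <= l.+1 -> 1 <= i' <= i.-1 ->
  sat (uword l) i phi -> sat (vword l) i' phi.
Proof.
elim: phi i i' => [c|f1 H1 f2 H2|f H|f H] i i' hi hi' /=.
- by rewrite nth_nseq nth_vword; [case: ifP | lia].
- by case=> h1 h2; split; [apply: (H1 i) | apply: (H2 i)].
- rewrite size_rcons !size_nseq => -[h1 h2].
  by split; [lia | apply: (H i.+1) => //; lia].
- rewrite size_rcons !size_nseq => -[j [hj h]].
  exists (i' + (j - i)); split; first lia.
  by apply: (H j) => //; lia.
Qed.

End ShiftUV.

Theorem mainTheorem15 (l : nat) (hl : 1 <= l) :
  (forall phi : form,
     noF (strip phi) /\
     (forall (w : word) (i : nat), 1 <= i <= size w ->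
        sat w i (strip phi) -> sat w i phi) /\
     (forall i i' : nat, 2 <= i <= l.+1 -> 1 <= i' <= i.-1 ->
        sat (uword l) i phi -> sat (vword l) i' phi) /\
     (forall i : nat, 1 <= i <= l.+1 ->
        sat (uword l) i phi -> ~ sat (vword l) i phi ->
        sat (uword l) i (strip phi))) /\
  (forall (Fam : word -> Prop) (phi : form),
     (forall w, Fam w -> 0 < size w) -> Fam (vword l) ->
     separates (uword l) Fam phi ->
     separates (uword l) Fam (strip phi) /\ fsize (strip phi) <= fsize phi).
Proof.
split=> [phi | Fam phi nonempty _ [u_phi fam_phi]].
- split; first exact: noF_strip.
  split; first by move=> w i /andP[_]; apply: strip_sound.
  split; first exact: uword_vword_shift.
  by move=> i _ u_i _; apply: aword_strip u_i _.
- split; last exact: fsize_strip.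
  split; first exact: aword_strip u_phi _.
  move=> w Fw w_strip; apply: (fam_phi w Fw).
  exact: strip_sound (nonempty w Fw) w_strip.
Qed.
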